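(* Let $K_n$ be the complete graph on $n$ vertices and $M_k$ a matching of $K_n$ with $k$ edges, and let $K_n\setminus M_k$ be the graph obtained by deleting the edges of $M_k$. Then $K(K_n\setminus M_k)\cong \mathbb{Z}_n^{\,n-2k-2}\oplus \mathbb{Z}_{n(n-2)}^{\,k}$ if $n\ge 2k+2$, and $K(K_n\setminus M_k)\cong \mathbb{Z}_{n-2}\oplus\mathbb{Z}_{n(n-2)}^{\,k-1}$ if $n=2k+1$.
   Context: For a connected graph $G$, the Laplacian matrix $L(G)$ has $(u,u)$-entry the degree of $u$ and $(u,v)$-entry $-m_{uv}$ (minus the number of edges between $u$ and $v$) for $u\ne v$. For a vertex $s$, $L(G,s)$ is $L(G)$ with row and column $s$ deleted, and the critical group is $K(G)=\mathbb{Z}^{V(G)\setminus s}/\mathrm{Im}\,L(G,s)$ (independent of $s$ up to isomorphism). $\mathbb{Z}_d^{\,r}$ denotes the direct sum of $r$ copies of $\mathbb{Z}/d\mathbb{Z}$. *)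

From mathcomp Require Import all_boot all_order all_algebra.
Set Implicit Arguments. Unset Strict Implicit. Unset Printing Implicit Defensive.
Import GRing.Theory Num.Theory.
Local Open Scope ring_scope.

Definition is_matching (n : nat) (M : {set {set 'I_n}}) : Prop :=
  (forall e, e \in M -> #|e| = 2%N) /\
  (forall e f, e \in M -> f \in M -> e != f -> [disjoint e & f]).

Definition adjKM (n : nat) (M : {set {set 'I_n}}) (u v : 'I_n) : bool :=
  (u != v) && ([set u; v] \notin M).

Definition laplacian (n : nat) (adj : rel 'I_n) : 'M[int]_n :=
  \matrix_(u, v) (if u == v then (#|[set w | adj u w]|)%:Z
                  else - ((adj u v : nat)%:Z)).

Definition red_laplacian (n : nat) (adj : rel 'I_n) (s : 'I_n) : 'M[int]_n.-1 :=
  \matrix_(i, j) laplacian adj (lift s i) (lift s j).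

(* coker_iso A ds : the cokernel Z^m / Im A (A acting on integer column
   vectors) is isomorphic to the direct sum of Z_(d) for d in ds.
   Encoded via the first isomorphism theorem: there is an additive map
   (necessarily an integer matrix P) from Z^m to (+)_i Z_(d_i) that is
   surjective and whose kernel is exactly Im A.  Congruence mod d is
   the intdiv one (mod 0 = equality, so Z_0 = Z). *)
Definition coker_iso (m : nat) (A : 'M[int]_m) (ds : seq int) : Prop :=
  exists P : 'M[int]_(size ds, m),
    (forall y : 'cV[int]_(size ds), exists x : 'cV[int]_m,
        forall i : 'I_(size ds), ((P *m x) i ord0 == y i ord0 %[mod nth 0 ds i])%Z) /\
    (forall x : 'cV[int]_m,
        (forall i : 'I_(size ds), ((P *m x) i ord0 == 0 %[mod nth 0 ds i])%Z)
        <-> exists v : 'cV[int]_m, x = A *m v).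

(* Critical group K(G) = Z^{V \ s} / Im L(G,s) is isomorphic to (+)_{d in ds} Z_d. *)
Definition critical_group_iso (n : nat) (adj : rel 'I_n) (s : 'I_n) (ds : seq int) : Prop :=
  coker_iso (red_laplacian adj s) ds.

From mathcomp Require Import all_boot all_order all_algebra.
From mathcomp Require Import zify ring.
Set Implicit Arguments. Unset Strict Implicit. Unset Printing Implicit Defensive.
Import GRing.Theory Num.Theory.
Local Open Scope ring_scope.

(* Write u' for the partner of u in M (u' = u if u is unmatched). The Laplacian of
   K_n \ M acts on z : V -> Z by (L z)(u) = (n-1) z(u) + z(u') - sum z, and the
   operator (Y z)(u) = (n-1) z(u) - z(u') satisfies LY = YL = n(n-2) I - (n-2) J,
   J the all-ones matrix.
   Identifying Z^(V \ s) with the zero-sum vectors on V, z is therefore in the image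
   of the reduced Laplacian iff Y z is constant modulo n(n-2).  The cokernel is then
   read off through explicit coordinates relative to an unmatched vertex r: z(w) - z(r)
   modulo n for the unmatched w, and (Y z)(b') - (Y z)(r) modulo n(n-2) for one end b
   of each edge of M.  The zero-sum condition makes one coordinate redundant: that of
   a second unmatched vertex if there is one, and otherwise (n = 2k+1) the edge bb'
   contributes only modulo n-2, the remaining factor n being forced because n(n-2) is
   odd. *)

Section LinearForms.

Variable n : nat.

Definition delta (v : 'I_n) : 'I_n -> int := fun u => (u == v)%:Z.

Definition linear_form (F : ('I_n -> int) -> int) :=
  forall z, \sum_v F (delta v) * z v = F z.

Lemma sum_delta (z : 'I_n -> int) a : \sum_v (a == v)%:Z * z v = z a.
Proof.
rewrite (bigD1 a) //= eqxx mul1r big1 ?addr0 //.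
by move=> v /negPf; rewrite eq_sym => ->; rewrite mul0r.
Qed.

Lemma linear_form_eval a : linear_form (fun z => z a).
Proof. by move=> z; apply: sum_delta. Qed.

Lemma linear_formB F G :
  linear_form F -> linear_form G -> linear_form (fun z => F z - G z).
Proof.
by move=> lF lG z; under eq_bigr do rewrite mulrBl; rewrite sumrB lF lG.
Qed.

Lemma linear_formZ c F : linear_form F -> linear_form (fun z => c * F z).
Proof.
by move=> lF z; under eq_bigr do rewrite -mulrA; rewrite -mulr_sumr lF.
Qed.

Lemma linear_form_ext F z z' : linear_form F -> z =1 z' -> F z = F z'.
Proof. by move=> lF zz'; rewrite -lF -[RHS]lF; apply: eq_bigr => v _; rewrite zz'. Qed.

Definition coord_mx m (F : nat -> ('I_n -> int) -> int) : 'M[int]_(m, n) :=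
  \matrix_(i < m, v < n) F i (delta v).

Lemma coord_mxE m (F : nat -> ('I_n -> int) -> int) (Z : 'cV[int]_n) (i : 'I_m) :
  linear_form (F i) -> (coord_mx m F *m Z) i ord0 = F i (fun v => Z v ord0).
Proof. by move=> lF; rewrite mxE -lF; apply: eq_bigr => v _; rewrite mxE. Qed.

End LinearForms.

Section ZeroSumExtension.

Variables (n : nat) (s : 'I_n).

(* Embeds Z^(V \ s) into the zero-sum vectors on V: the value at s is minus the sum. *)
Definition sum0_mx : 'M[int]_(n, n.-1) :=
  \matrix_(u, j) (if u == s then -1 else (u == lift s j)%:Z).

Definition sum0_ext (x : 'cV[int]_n.-1) (u : 'I_n) : int := (sum0_mx *m x) u ord0.

Lemma sum0_ext_lift x i : sum0_ext x (lift s i) = x i ord0.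
Proof.
have liftNs : (lift s i == s) = false by rewrite eq_sym (negPf (neq_lift s i)).
rewrite /sum0_ext mxE (bigD1 i) //= mxE liftNs eqxx mul1r big1 ?addr0 //.
by move=> j ji; rewrite mxE liftNs (inj_eq (@lift_inj _ s)) eq_sym (negPf ji) mul0r.
Qed.

Lemma sum0_ext_pivot x : sum0_ext x s = - \sum_i x i ord0.
Proof. by rewrite /sum0_ext mxE -sumrN; apply: eq_bigr => j _; rewrite mxE eqxx mulN1r. Qed.

Lemma sum_sum0_ext x : \sum_u sum0_ext x u = 0.
Proof.
rewrite (bigD1_ord s) //= sum0_ext_pivot.
by under eq_bigr do rewrite sum0_ext_lift; rewrite addNr.
Qed.

Lemma sum0_ext_col z : \sum_u z u = 0 -> sum0_ext (\col_i z (lift s i)) =1 z.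
Proof.
move=> z0 u; case: (unliftP s u) => [i ->|->]; first by rewrite sum0_ext_lift mxE.
move: z0; rewrite sum0_ext_pivot (bigD1_ord s) //= => /eqP; rewrite addr_eq0 => /eqP ->.
by congr (- _); apply: eq_bigr => i _; rewrite mxE.
Qed.

Definition ext0 (v : 'cV[int]_n.-1) (u : 'I_n) : int :=
  if unlift s u is Some i then v i ord0 else 0.

Lemma ext0_lift v i : ext0 v (lift s i) = v i ord0.
Proof. by rewrite /ext0 liftK. Qed.

Lemma ext0_pivot v : ext0 v s = 0.
Proof. by rewrite /ext0 unlift_none. Qed.

End ZeroSumExtension.

Section Matching.

Variables (n : nat) (M : {set {set 'I_n}}).
Hypothesis matchingM : is_matching M.

Definition mate (u : 'I_n) : 'I_n := odflt u [pick v | [set u; v] \in M].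

Lemma matching_edge_neq u v : [set u; v] \in M -> u != v.
Proof.
by move=> uvM; apply/negP => /eqP uv; move: (matchingM.1 _ uvM); rewrite -uv setUid cards1.
Qed.

Lemma matching_edge_uniq u v w : [set u; v] \in M -> [set u; w] \in M -> v = w.
Proof.
move=> uvM uwM; case: (eqVneq [set u; v] [set u; w]) => [E|neq].
  have : v \in [set u; w] by rewrite -E !inE eqxx orbT.
  rewrite !inE => /orP [/eqP vu|/eqP //].
  by move: (matching_edge_neq uvM); rewrite vu eqxx.
by move/pred0P/(_ u): (matchingM.2 _ _ uvM uwM neq); rewrite /= !inE !eqxx.
Qed.

Lemma mateP u v : ([set u; v] \in M) = (u != v) && (v == mate u).
Proof.
rewrite /mate; case: pickP => [w uwM|noedge] /=.
  apply/idP/andP => [uvM|[_ /eqP ->] //].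
  by rewrite (matching_edge_uniq uvM uwM) eqxx (matching_edge_neq uwM).
rewrite noedge; apply/esym/negbTE; rewrite negb_and negbK.
by case: eqVneq.
Qed.

Lemma mateK : involutive mate.
Proof.
move=> u; have [mateu|mateNu] := eqVneq (mate u) u; first by rewrite !mateu.
have : [set u; mate u] \in M by rewrite mateP eq_sym mateNu eqxx.
by rewrite setUC mateP => /andP [_ /eqP <-].
Qed.

Lemma adjKM_mate u v : adjKM M u v = (u != v) && (v != mate u).
Proof. by rewrite /adjKM mateP; case: (u != v). Qed.

Lemma card_adjKM u :
  (#|[set w | adjKM M u w]|)%:Z = n%:Z - 1 - (mate u != u)%:Z.
Proof.
have := ltn_ord u; have [mateu|mateNu] := eqVneq (mate u) u => /= n_gt0.
  have -> : [set w | adjKM M u w] = [set~ u].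
    by apply/setP => w; rewrite !inE adjKM_mate mateu (eq_sym u w) andbb.
  rewrite cardsC1 card_ord; lia.
have -> : [set w | adjKM M u w] = ~: [set u; mate u].
  by apply/setP => w; rewrite !inE adjKM_mate negb_or eq_sym.
have := cardsC [set u; mate u]; rewrite cards2 eq_sym mateNu card_ord /=; lia.
Qed.

Lemma laplacian_adjKM u v :
  laplacian (adjKM M) u v = (n%:Z - 1) * (u == v)%:Z + (v == mate u)%:Z - 1.
Proof.
rewrite /laplacian mxE; have [<-|uNv] := eqVneq u v.
  by rewrite card_adjKM mulr1; case: eqVneq => /= _; ring.
by rewrite mulr0 add0r adjKM_mate uNv /=; case: (v == mate u).
Qed.

Definition lapKM (z : 'I_n -> int) (u : 'I_n) : int :=
  (n%:Z - 1) * z u + z (mate u) - \sum_v z v.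

(* The operator Y of the header: it inverts [lapKM] up to the scalar n(n-2) and a
   multiple of the all-ones functional. *)
Definition qinvKM (z : 'I_n -> int) (u : 'I_n) : int := (n%:Z - 1) * z u - z (mate u).

Lemma laplacian_adjKM_mulE (Z : 'cV[int]_n) u :
  (laplacian (adjKM M) *m Z) u ord0 = lapKM (fun v => Z v ord0) u.
Proof.
have entry v : laplacian (adjKM M) u v * Z v ord0 =
    (n%:Z - 1) * ((u == v)%:Z * Z v ord0) + (mate u == v)%:Z * Z v ord0 - Z v ord0.
  by rewrite laplacian_adjKM (eq_sym v); ring.
rewrite mxE /lapKM; under eq_bigr do rewrite entry.
by rewrite sumrB big_split /= -mulr_sumr !sum_delta.
Qed.

Lemma sum_mate (z : 'I_n -> int) : \sum_v z (mate v) = \sum_v z v.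
Proof. by rewrite [RHS](reindex_inj (can_inj mateK)). Qed.

Lemma sum_lapKM z : \sum_v lapKM z v = 0.
Proof.
rewrite /lapKM sumrB big_split /= sum_mate -mulr_sumr sumr_const card_ord.
by rewrite -mulr_natr natz; ring.
Qed.

Lemma sum_qinvKM z : \sum_v qinvKM z v = (n%:Z - 2) * \sum_v z v.
Proof. by rewrite /qinvKM sumrB sum_mate -mulr_sumr; ring. Qed.

Lemma qinvKM_lapKM z u :
  qinvKM (lapKM z) u = n%:Z * (n%:Z - 2) * z u - (n%:Z - 2) * \sum_v z v.
Proof. by rewrite /qinvKM /lapKM mateK; ring. Qed.

Lemma lapKM_qinvKM z u :
  lapKM (qinvKM z) u = n%:Z * (n%:Z - 2) * z u - (n%:Z - 2) * \sum_v z v.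
Proof. by rewrite /lapKM sum_qinvKM /qinvKM mateK; ring. Qed.

Lemma linear_form_qinvKM u : linear_form (fun z => qinvKM z u).
Proof. exact: linear_formB (linear_formZ _ (linear_form_eval u)) (linear_form_eval _). Qed.

Lemma lapKM_ext z z' u : z =1 z' -> lapKM z u = lapKM z' u.
Proof. by move=> zz'; rewrite /lapKM !zz' (eq_bigr _ (fun v _ => zz' v)). Qed.

Definition const_mod (d : int) (f : 'I_n -> int) := forall u v, (d %| f u - f v)%Z.

Lemma const_modP d f r : const_mod d f <-> forall u, (d %| f u - f r)%Z.
Proof.
split=> [fd u|fd u v]; first exact: fd.
have -> : f u - f v = (f u - f r) - (f v - f r) by ring.
exact: rpredB.
Qed.

Section Reduced.

Variable s : 'I_n.
Let L := red_laplacian (adjKM M) s.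

Lemma red_laplacian_mulE v i : (L *m v) i ord0 = lapKM (ext0 s v) (lift s i).
Proof.
rewrite (@lapKM_ext _ (fun u => (\col_u ext0 s v u) u ord0)); last by move=> u; rewrite mxE.
rewrite -laplacian_adjKM_mulE !mxE (bigD1_ord s) //= mxE ext0_pivot mulr0 add0r.
by apply: eq_bigr => j _; rewrite !mxE ext0_lift.
Qed.

Lemma sum0_ext_red_laplacian v : sum0_ext s (L *m v) =1 lapKM (ext0 s v).
Proof.
move=> u; case: (unliftP s u) => [i ->|->].
  by rewrite sum0_ext_lift red_laplacian_mulE.
rewrite sum0_ext_pivot; under eq_bigr do rewrite red_laplacian_mulE.
have := sum_lapKM (ext0 s v); rewrite (bigD1_ord s) //= => /eqP.
by rewrite addr_eq0 => /eqP.
Qed.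

(* On zero-sum vectors, [lapKM] and [qinvKM] compose to multiplication by n(n-2). *)
Lemma red_laplacian_imageP x : (2 < n)%N ->
  (exists v, x = L *m v) <-> const_mod (n%:Z * (n%:Z - 2)) (qinvKM (sum0_ext s x)).
Proof.
move=> n_gt2; set N := _ * _; have N_neq0 : N != 0 by rewrite /N; apply/eqP; nia.
split=> [[v ->]|]; first apply/(const_modP _ _ s) => u.
  have qinv_ext w : qinvKM (sum0_ext s (L *m v)) w = qinvKM (lapKM (ext0 s v)) w.
    by rewrite /qinvKM !sum0_ext_red_laplacian.
  rewrite !qinv_ext !qinvKM_lapKM -/N.
  have -> : forall a b c : int, N * a - c - (N * b - c) = N * (a - b) by move=> *; ring.
  exact: dvdz_mulr.
set y := qinvKM _ => /(const_modP _ _ s) ydvd.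
pose w u := ((y u - y s) %/ N)%Z.
have Nw u : N * w u = y u - y s by rewrite mulrC divzK.
have ext0w : ext0 s (\col_i w (lift s i)) =1 w.
  move=> u; case: (unliftP s u) => [i ->|->]; first by rewrite ext0_lift mxE.
  by rewrite ext0_pivot /w subrr div0z.
exists (\col_i w (lift s i)); apply/matrixP => i j.
rewrite (ord1 j) red_laplacian_mulE (lapKM_ext _ ext0w) -(sum0_ext_lift s).
apply: (mulfI N_neq0).
have -> : N * lapKM w (lift s i) = lapKM y (lift s i).
  rewrite /lapKM mulrBr mulrDr mulrCA !Nw mulr_sumr; under eq_bigr do rewrite Nw.
  by rewrite sumrB sumr_const card_ord -mulr_natr natz; ring.
by rewrite lapKM_qinvKM sum_sum0_ext mulr0 subr0.
Qed.

Lemma critical_group_iso_coords (ds : seq int) (F : nat -> ('I_n -> int) -> int) :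
  (2 < n)%N -> (forall i, linear_form (F i)) ->
  (forall z, \sum_u z u = 0 -> const_mod (n%:Z * (n%:Z - 2)) (qinvKM z) <->
     (forall i, (i < size ds)%N -> (nth 0 ds i %| F i z)%Z)) ->
  (forall t : nat -> int, exists2 z, \sum_u z u = 0 &
     forall i, (i < size ds)%N -> (nth 0 ds i %| F i z - t i)%Z) ->
  critical_group_iso (adjKM M) s ds.
Proof.
move=> n_gt2 linF kerF surjF; exists (coord_mx (size ds) F *m sum0_mx s).
have coordE x (i : 'I_(size ds)) :
    (coord_mx (size ds) F *m sum0_mx s *m x) i ord0 = F i (sum0_ext s x).
  by rewrite -mulmxA coord_mxE.
split=> [y|x].
  have [z z0 Fz] := surjF (fun j => if insub j is Some i then y i ord0 else 0).
  exists (\col_i z (lift s i)) => i; rewrite coordE eqz_mod_dvd.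
  rewrite (linear_form_ext _ (sum0_ext_col s z0)) //.
  by move: (Fz i (ltn_ord i)); rewrite valK.
rewrite red_laplacian_imageP // kerF ?sum_sum0_ext //.
split=> [dvdF i lt_i|dvdF i].
  by move: (dvdF (Ordinal lt_i)); rewrite coordE eqz_mod_dvd subr0.
by move: (dvdF i (ltn_ord i)); rewrite coordE eqz_mod_dvd subr0.
Qed.

End Reduced.

Definition unmatched := [set u | mate u == u].
Definition lower_ends := [set u : 'I_n | (u < mate u)%N].

Lemma card_lower_ends : #|lower_ends| = #|M|.
Proof.
have edge_inj : {in lower_ends &, injective (fun b => [set b; mate b])}.
  move=> b b'; rewrite !inE => lt_b lt_b' E.
  have : b' \in [set b; mate b] by rewrite E !inE eqxx.
  by rewrite !inE => /orP [/eqP //|/eqP b'E]; move: lt_b'; rewrite b'E mateK; lia.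
rewrite -(card_in_imset edge_inj).
suff -> : [set [set b; mate b] | b in lower_ends] = M by [].
apply/setP => e; apply/imsetP/idP => [[b]|eM].
  rewrite inE => lt_b ->; rewrite mateP eqxx andbT.
  by apply: contraTneq lt_b => <-; rewrite ltnn.
have /cards2P [x [y [xNy eE]]] : #|e| == 2%N by rewrite matchingM.1.
move: eM; rewrite eE mateP xNy /= => /eqP yE; subst y.
case: (ltngtP x (mate x)) => [lt_x|lt_mx|/val_inj mx].
- by exists x; rewrite ?inE.
- by exists (mate x); rewrite ?inE mateK // setUC.
- by rewrite -mx eqxx in xNy.
Qed.

Lemma card_unmatched : (#|unmatched| + 2 * #|M| = n)%N.
Proof.
have upperE : mate @: lower_ends = [set u | (mate u < u)%N].
  apply/setP => u; rewrite inE; apply/imsetP/idP => [[b]|lt_u].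
    by rewrite inE => lt_b ->; rewrite mateK.
  by exists (mate u); rewrite ?inE mateK.
have partition : ~: unmatched = lower_ends :|: mate @: lower_ends.
  by apply/setP => u; rewrite upperE !inE -val_eqE /=; lia.
have disjoint : lower_ends :&: mate @: lower_ends = set0.
  by apply/setP => u; rewrite upperE !inE; lia.
have := cardsC unmatched; rewrite partition cardsU disjoint cards0.
by rewrite (card_imset _ (can_inj mateK)) card_lower_ends card_ord; lia.
Qed.

Lemma lower_ends_matched u : u \in lower_ends -> mate u != u.
Proof. by rewrite inE; apply: contraTneq => ->; rewrite ltnn. Qed.

Lemma mate_lower_ends u : u \in lower_ends -> (mate u \in lower_ends) = false.
Proof. by rewrite !inE mateK; lia. Qed.

Lemma qinvKM_unmatched z u : mate u = u -> qinvKM z u = (n%:Z - 2) * z u.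
Proof. by rewrite /qinvKM => ->; ring. Qed.

Section UnmatchedReference.

Variable r : 'I_n.
Hypothesis mate_r : mate r = r.
Local Notation N := (n%:Z * (n%:Z - 2)).

Lemma dvd_qinvKM_mate z u : (N %| qinvKM z (mate u) - qinvKM z r)%Z ->
  (N %| qinvKM z u - qinvKM z r)%Z.
Proof.
have -> : qinvKM z u - qinvKM z r =
    N * (z (mate u) - z r) - (n%:Z - 1) * (qinvKM z (mate u) - qinvKM z r).
  by rewrite /qinvKM mateK mate_r; ring.
by move=> dvdN; apply: rpredB; [apply: dvdz_mulr | apply: dvdz_mull].
Qed.

Lemma dvd_qinvKM_matched z u : mate u != u ->
  (forall b, b \in lower_ends -> (b == u) || (b == mate u) ->
     (N %| qinvKM z (mate b) - qinvKM z r)%Z) ->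
  (N %| qinvKM z u - qinvKM z r)%Z.
Proof.
move=> mateNu dvd_lower; case: (ltngtP u (mate u)) => [lt_u|lt_mu|/val_inj mu].
- by apply: dvd_qinvKM_mate; apply: dvd_lower; rewrite ?inE ?eqxx.
- by rewrite -[u in qinvKM z u]mateK; apply: dvd_lower; rewrite ?inE ?mateK ?eqxx ?orbT.
- by rewrite -mu eqxx in mateNu.
Qed.

Lemma sum_qinvKM_sub z : \sum_u z u = 0 ->
  \sum_u (qinvKM z u - qinvKM z r) = - (N * z r).
Proof.
move=> z0; rewrite sumrB sum_qinvKM z0 sumr_const card_ord -mulr_natr natz.
by rewrite qinvKM_unmatched //; ring.
Qed.

(* The zero-sum condition pins down the last two values of [qinvKM z] modulo N. *)
Lemma dvd_qinvKM_pair z a b : \sum_u z u = 0 -> a != b ->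
  (forall u, u != a -> u != b -> (N %| qinvKM z u - qinvKM z r)%Z) ->
  (N %| (qinvKM z a - qinvKM z r) + (qinvKM z b - qinvKM z r))%Z.
Proof.
move=> z0 aNb dvd_rest; have := sum_qinvKM_sub z0.
rewrite (bigD1 a) //= (bigD1 b) 1?eq_sym //= addrA => /(canRL (addrK _)) ->.
apply: rpredB; first by rewrite rpredN dvdz_mulr.
by apply: rpred_sum => u /andP [uNa uNb]; apply: dvd_rest.
Qed.

End UnmatchedReference.

End Matching.

Section EnumCat.

Variables (T : finType) (A B : {set T}).
Local Notation W := (enum A ++ enum B).

Lemma size_enum_cat : size W = (#|A| + #|B|)%N.
Proof. by rewrite size_cat -!cardE. Qed.

Lemma nth_enum_cat x0 i : (i < #|A| + #|B|)%N ->
  nth x0 W i \in (if (i < #|A|)%N then A else B).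
Proof.
move=> lt_i; rewrite nth_cat -cardE; case: ifP => lt_iA; rewrite -mem_enum;
  apply: mem_nth; rewrite -cardE; lia.
Qed.

Lemma index_enum_catl u : u \in A -> (index u W < #|A|)%N.
Proof. by move=> uA; rewrite index_cat mem_enum uA cardE index_mem mem_enum. Qed.

Lemma index_enum_catr u : u \notin A -> u \in B ->
  (#|A| <= index u W < #|A| + #|B|)%N.
Proof.
move=> uNA uB; rewrite index_cat mem_enum (negPf uNA) -cardE leq_addr ltn_add2l.
by rewrite cardE index_mem mem_enum.
Qed.

Lemma nth_index_enum_cat x0 u : (u \in A) || (u \in B) -> nth x0 W (index u W) = u.
Proof. by move=> uAB; rewrite nth_index // mem_cat !mem_enum. Qed.

End EnumCat.

Section TwoUnmatched.

Variables (n : nat) (M : {set {set 'I_n}}).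
Hypothesis matchingM : is_matching M.
Variables r r' : 'I_n.
Hypotheses (r_unmatched : r \in unmatched M) (r'_unmatched : r' \in unmatched M).
Hypothesis rNr' : r != r'.
Local Notation N := (n%:Z * (n%:Z - 2)).

Definition free_unmatched := unmatched M :\: [set r; r'].
Local Notation U := free_unmatched.
Local Notation W := (enum U ++ enum (lower_ends M)).

Definition coord_unmatched (i : nat) (z : 'I_n -> int) : int :=
  let w := nth r W i in
  if (i < #|U|)%N then z w - z r else qinvKM M z (mate M w) - qinvKM M z r.

Lemma linear_form_coord_unmatched i : linear_form (coord_unmatched i).
Proof.
rewrite /coord_unmatched /=; case: (i < #|U|)%N.
- exact: linear_formB (linear_form_eval _) (linear_form_eval _).
- exact: linear_formB (linear_form_qinvKM _ _) (linear_form_qinvKM _ _).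
Qed.

Lemma free_unmatched_lower_ends u : u \in lower_ends M -> u \notin U.
Proof. by move/lower_ends_matched; rewrite !inE => /negPf ->; rewrite andbF. Qed.

Lemma uniq_coord_unmatched : uniq W.
Proof.
rewrite cat_uniq !enum_uniq andbT /=; apply/hasPn => u.
by rewrite !mem_enum => /free_unmatched_lower_ends.
Qed.

Let mate_r : mate M r = r.
Proof. by move: r_unmatched; rewrite inE => /eqP. Qed.

Lemma coord_unmatched_kernel z : (2 < n)%N -> \sum_u z u = 0 ->
  const_mod N (qinvKM M z) <->
  (forall i, (i < size W)%N ->
     ((if (i < #|U|)%N then n%:Z else N) %| coord_unmatched i z)%Z).
Proof.
move=> n_gt2 z0; rewrite size_enum_cat (const_modP _ _ r).
have n2_neq0 : n%:Z - 2 != 0 by apply/eqP; lia.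
have qinv_free w : w \in U -> qinvKM M z w - qinvKM M z r = (n%:Z - 2) * (z w - z r).
  rewrite !inE => /andP [_ /eqP mate_w].
  by rewrite !qinvKM_unmatched // mulrBr.
split=> [dvd_all i lt_i|dvd_coord].
  have := nth_enum_cat r lt_i; rewrite /coord_unmatched; case: ifP => // _ w_free.
  by rewrite -(dvdz_mul2l n2_neq0) -qinv_free // mulrC dvd_all.
have dvd_matched u : mate M u != u -> (N %| qinvKM M z u - qinvKM M z r)%Z.
  move=> mateNu; apply: dvd_qinvKM_matched => // b b_lower _.
  have /andP [le_b lt_b] := index_enum_catr (free_unmatched_lower_ends b_lower) b_lower.
  move: (dvd_coord _ lt_b); rewrite /coord_unmatched ltnNge le_b /=.
  by rewrite nth_index_enum_cat // b_lower orbT.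
have dvd_other u : u != r' -> (N %| qinvKM M z u - qinvKM M z r)%Z.
  move=> uNr'; have [->|uNr] := eqVneq u r; first by rewrite subrr dvdz0.
  have [mate_u|] := eqVneq (mate M u) u; last exact: dvd_matched.
  have u_free : u \in U by rewrite !inE mate_u eqxx negb_or uNr uNr'.
  have lt_u := index_enum_catl (lower_ends M) u_free.
  move: (dvd_coord _ (ltn_addr _ lt_u)); rewrite /coord_unmatched lt_u /=.
  rewrite nth_index_enum_cat ?u_free // qinv_free //.
  by rewrite [n%:Z * _]mulrC (dvdz_mul2l n2_neq0).
move=> u; have [->|] := eqVneq u r'; last exact: dvd_other.
have r'Nr : r' != r by rewrite eq_sym.
have := dvd_qinvKM_pair matchingM mate_r z0 r'Nr; rewrite subrr addr0; apply.
by move=> v vNr' _; apply: dvd_other.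
Qed.

Lemma coord_unmatched_surj (t : nat -> int) :
  exists2 z, \sum_u z u = 0 & forall i, (i < size W)%N -> coord_unmatched i z = t i.
Proof.
pose z0 v :=
  if v \in U then t (index v W) else if v \in lower_ends M then - t (index v W) else 0.
pose z v := z0 v - (r' == v)%:Z * \sum_u z0 u.
have zE v : v != r' -> z v = z0 v.
  by rewrite eq_sym => /negPf r'Nv; rewrite /z r'Nv mul0r subr0.
exists z; first by rewrite /z /= sumrB sum_delta subrr.
have r_lower : r \notin lower_ends M by rewrite inE mate_r ltnn.
have r_free : r \notin U by rewrite !inE eqxx.
have zr : z r = 0 by rewrite zE // /z0 (negPf r_free) (negPf r_lower).
move=> i; rewrite size_enum_cat => lt_i; rewrite /coord_unmatched.
have index_w : index (nth r W i) W = i.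
  by rewrite index_uniq ?size_enum_cat ?uniq_coord_unmatched.
have := nth_enum_cat r lt_i; set w := nth r W i; case: ifP => _ w_in.
  have wNr' : w != r' by move: w_in; rewrite !inE => /andP [/norP [_ ->]].
  by rewrite zr subr0 zE // /z0 w_in index_w.
have matched_neq_r' u : mate M u != u -> u != r'.
  by apply: contraNneq => ->; move: r'_unmatched; rewrite inE.
have w_matched := lower_ends_matched w_in.
have mw_matched : mate M (mate M w) != mate M w by rewrite (mateK matchingM) eq_sym.
rewrite (qinvKM_unmatched _ mate_r) zr mulr0 subr0 /qinvKM (mateK matchingM).
rewrite !zE ?matched_neq_r' // /z0.
rewrite (negPf (free_unmatched_lower_ends w_in)) w_in index_w mate_lower_ends //.
by rewrite !inE (negPf mw_matched) andbF mulr0 sub0r opprK.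
Qed.

End TwoUnmatched.

Section OneUnmatched.

Variables (n k : nat) (M : {set {set 'I_n}}).
Hypothesis matchingM : is_matching M.
Hypothesis n_odd : n = (2 * k + 1)%N.
Variables r b : 'I_n.
Hypotheses (unmatchedE : unmatched M = [set r]) (b_lower : b \in lower_ends M).
Local Notation N := (n%:Z * (n%:Z - 2)).
Local Notation a := (mate M b).
Local Notation W := (b :: enum (lower_ends M :\ b)).

Definition coord_edge (i : nat) (z : 'I_n -> int) : int :=
  qinvKM M z (mate M (nth r W i)) - qinvKM M z r.

Lemma linear_form_coord_edge i : linear_form (coord_edge i).
Proof. exact: linear_formB (linear_form_qinvKM _ _) (linear_form_qinvKM _ _). Qed.

Let mate_r : mate M r = r.
Proof. by move: (set11 r); rewrite -unmatchedE inE => /eqP. Qed.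

Let matched u : u != r -> mate M u != u.
Proof. by apply: contra => mate_u; rewrite -in_set1 -unmatchedE inE. Qed.

Let nE : n%:Z = 2 * k%:Z + 1.
Proof. by rewrite n_odd; lia. Qed.

Let a_lower : (a \in lower_ends M) = false.
Proof. exact: mate_lower_ends. Qed.

Let aNb : a != b.
Proof. exact: lower_ends_matched. Qed.

Lemma uniq_coord_edge : uniq W.
Proof. by rewrite /= enum_uniq mem_enum !inE eqxx. Qed.

Lemma index_coord_edge u : u \in lower_ends M -> u != b ->
  (0 < index u W < size W)%N /\ nth r W (index u W) = u.
Proof.
move=> u_lower uNb.
have uW : u \in W by rewrite in_cons mem_enum in_setD1 uNb u_lower orbT.
by rewrite nth_index // index_mem uW /= eq_sym (negPf uNb).
Qed.

Lemma coord_edge_kernel z : \sum_u z u = 0 ->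
  const_mod N (qinvKM M z) <->
  (forall i, (i < size W)%N ->
     ((if i == 0%N then n%:Z - 2 else N) %| coord_edge i z)%Z).
Proof.
move=> z0; rewrite (const_modP _ _ r).
split=> [dvd_all [|i] _ /=|dvd_coord];
  [exact: dvdz_trans (dvdz_mull _ (dvdzz _)) (dvd_all a) | exact: dvd_all |].
have dvd_rest u : u != a -> u != b -> (N %| qinvKM M z u - qinvKM M z r)%Z.
  move=> uNa uNb; have [->|uNr] := eqVneq u r; first by rewrite subrr dvdz0.
  apply: dvd_qinvKM_matched => // [|c c_lower c_u]; first exact: matched.
  have cNb : c != b.
    apply: contraTneq c_u => ->; rewrite negb_or eq_sym uNb /=.
    by apply: contra uNa => /eqP ->; rewrite (mateK matchingM).
  have [/andP [pos_c lt_c] nth_c] := index_coord_edge c_lower cNb.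
  by move: (dvd_coord _ lt_c); rewrite eqn0Ngt pos_c /coord_edge nth_c.
pose Xa := qinvKM M z a - qinvKM M z r; pose Xb := qinvKM M z b - qinvKM M z r.
have dvd_sum : (N %| Xa + Xb)%Z := dvd_qinvKM_pair matchingM mate_r z0 aNb dvd_rest.
have dvd_diff : (N %| Xa - Xb)%Z.
  have -> : Xa - Xb = n%:Z * (z a - z b) by rewrite /Xa /Xb /qinvKM (mateK matchingM); ring.
  have n_neq0 : n%:Z != 0 by apply/eqP; lia.
  rewrite dvdz_mul2l //.
  have -> : z a - z b = coord_edge 0 z - (n%:Z - 2) * (z a - z r).
    by rewrite /coord_edge /= /qinvKM (mateK matchingM) mate_r; ring.
  by apply: rpredB; [exact: (dvd_coord 0%N) | exact: dvdz_mulr].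
(* N = 4k^2 - 1 is odd, so N divides Xa as soon as it divides 2 Xa. *)
have dvd_a : (N %| Xa)%Z.
  have -> : Xa = 2 * k%:Z ^+ 2 * ((Xa + Xb) + (Xa - Xb)) - N * Xa.
    by rewrite nE; ring.
  by apply: rpredB; [apply: dvdz_mull; apply: rpredD | apply: dvdz_mulr].
move=> u; have [->|uNa] := eqVneq u a; first exact: dvd_a.
have [->|uNb] := eqVneq u b; last exact: dvd_rest.
by rewrite -/Xb (_ : Xb = (Xa + Xb) - Xa); [apply: rpredB | ring].
Qed.

Lemma coord_edge_surj (t : nat -> int) : exists2 z, \sum_u z u = 0 &
  forall i, (i < size W)%N ->
    ((if i == 0%N then n%:Z - 2 else N) %| coord_edge i z - t i)%Z.
Proof.
pose z0 v := if v \in lower_ends M :\ b then - t (index v W) else 0.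
pose R := \sum_u z0 u; pose alpha := k%:Z * (t 0%N - R).
pose z v := z0 v + (a == v)%:Z * alpha + (b == v)%:Z * (- R - alpha).
exists z.
  rewrite /z /= !big_split /= (sum_delta (fun=> alpha)) (sum_delta (fun=> - R - alpha)).
  by rewrite -/R; ring.
have r_matched u : mate M u != u -> u != r by apply: contraNneq => ->; rewrite mate_r.
have aNr : a != r by apply: r_matched; rewrite (mateK matchingM) eq_sym.
have bNr : b != r := r_matched _ (lower_ends_matched b_lower).
have zr : z r = 0.
  rewrite /z /z0 !inE mate_r ltnn andbF (negPf aNr) (negPf bNr).
  by rewrite /= !mul0r !addr0.
move=> [|i] lt_i /=.
  rewrite /coord_edge /= (qinvKM_unmatched _ mate_r) zr /qinvKM (mateK matchingM) /z /z0.
  rewrite in_setD1 a_lower andbF setD11 !eqxx (eq_sym b) (negPf aNb) /= /alpha.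
  apply/dvdzP; exists ((k%:Z + 1) * (t 0%N - R)).
  by rewrite nE; ring.
set w := nth r W i.+1.
have w_in : w \in lower_ends M :\ b by rewrite -mem_enum; apply: mem_nth.
have index_w : index w W = i.+1 by rewrite index_uniq ?uniq_coord_edge.
have /andP [wNb w_lower] : (w != b) && (w \in lower_ends M) by rewrite -in_setD1.
have mw_lower := mate_lower_ends matchingM w_lower.
have mw_in : mate M w \notin lower_ends M :\ b by rewrite in_setD1 mw_lower andbF.
have wNa : w != a by apply: contraTneq w_lower => ->; rewrite a_lower.
have mwNa : mate M w != a by rewrite (inj_eq (can_inj (mateK matchingM))).
have mwNb : mate M w != b.
  by apply: contraTneq w_lower => mwb; rewrite -(mateK matchingM w) mwb a_lower.
rewrite /coord_edge -/w (qinvKM_unmatched _ mate_r) zr /qinvKM (mateK matchingM) /z /z0.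
rewrite w_in (negPf mw_in) index_w !(eq_sym a) !(eq_sym b) (negPf wNa) (negPf wNb).
by rewrite (negPf mwNa) (negPf mwNb) /= !mul0r !addr0 !mulr0 sub0r subr0 opprK subrr dvdz0.
Qed.

End OneUnmatched.

Lemma nth_nseq_cat (T : Type) (x0 x y : T) a b i : (i < a + b)%N ->
  nth x0 (nseq a x ++ nseq b y) i = if (i < a)%N then x else y.
Proof.
move=> lt_i; rewrite nth_cat size_nseq; case: ifP => lt_ia; rewrite nth_nseq ?lt_ia //.
by rewrite ltn_subLR ?lt_i // leqNgt lt_ia.
Qed.

Lemma natz_mul_subn2 n : (2 <= n)%N -> Posz (n * (n - 2)) = n%:Z * (n%:Z - 2).
Proof. by move=> n_ge2; rewrite PoszM -subzn. Qed.

Lemma critical_group_iso_two_unmatched n k (M : {set {set 'I_n}}) (s : 'I_n) :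
  is_matching M -> #|M| = k -> (2 * k + 2 <= n)%N -> (2 < n)%N ->
  critical_group_iso (adjKM M) s
    (nseq (n - 2 * k - 2) (Posz n) ++ nseq k (Posz (n * (n - 2)))).
Proof.
move=> matchingM Mk le_n n_gt2; have := card_unmatched matchingM; rewrite Mk => card_un.
have [r [r' [r_un r'_un rNr']]] :
    exists r r', [/\ r \in unmatched M, r' \in unmatched M & r != r'].
  by apply/card_gt1P; lia.
have card_U : #|free_unmatched M r r'| = (n - 2 * k - 2)%N.
  rewrite cardsDS; last by apply/subsetP => u /set2P [] ->.
  by rewrite cards2 rNr'; lia.
set ds := nseq _ _ ++ _.
have size_ds : size ds = size (enum (free_unmatched M r r') ++ enum (lower_ends M)).
  by rewrite size_enum_cat card_U card_lower_ends // size_cat !size_nseq Mk.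
have nth_ds i : (i < size ds)%N ->
    nth 0 ds i = if (i < #|free_unmatched M r r'|)%N then n%:Z else n%:Z * (n%:Z - 2).
  rewrite card_U size_cat !size_nseq => lt_i.
  by rewrite nth_nseq_cat // natz_mul_subn2 //; lia.
apply: (@critical_group_iso_coords _ _ matchingM s _ (coord_unmatched M r r')) => //.
- exact: linear_form_coord_unmatched.
- move=> z z0; rewrite (coord_unmatched_kernel matchingM r_un r'_un rNr') // size_ds.
  by split=> dvd_coord i lt_i; move: (dvd_coord i lt_i); rewrite nth_ds ?size_ds.
- move=> t; have [z z0 coord_z] := coord_unmatched_surj matchingM r_un r'_un rNr' t.
  by exists z => // i; rewrite size_ds => lt_i; rewrite coord_z // subrr dvdz0.
Qed.

Lemma critical_group_iso_one_unmatched n k (M : {set {set 'I_n}}) (s : 'I_n) :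
  is_matching M -> #|M| = k -> (0 < k)%N -> n = (2 * k + 1)%N ->
  critical_group_iso (adjKM M) s (Posz (n - 2) :: nseq (k - 1) (Posz (n * (n - 2)))).
Proof.
move=> matchingM Mk k_gt0 n_odd; have := card_unmatched matchingM; rewrite Mk => card_un.
have [r unmatchedE] : exists r, unmatched M = [set r] by apply/cards1P; lia.
have [b b_lower] : exists b, b \in lower_ends M.
  by apply/card_gt0P; rewrite card_lower_ends // Mk.
set ds := _ :: _.
have size_ds : size ds = size (b :: enum (lower_ends M :\ b)).
  have := cardsD1 b (lower_ends M); rewrite b_lower card_lower_ends // Mk /= => ->.
  by rewrite /= size_nseq -cardE addKn.
have nth_ds i : (i < size ds)%N ->
    nth 0 ds i = if i == 0%N then n%:Z - 2 else n%:Z * (n%:Z - 2).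
  case: i => [|i] /=; first by rewrite -subzn //; lia.
  by rewrite size_nseq => lt_i; rewrite nth_nseq ifT ?natz_mul_subn2 //; lia.
apply: (@critical_group_iso_coords _ _ matchingM s _ (coord_edge M r b)).
- by lia.
- exact: linear_form_coord_edge.
- move=> z z0; rewrite (coord_edge_kernel matchingM n_odd unmatchedE b_lower) // size_ds.
  by split=> dvd_coord i lt_i; move: (dvd_coord i lt_i); rewrite nth_ds ?size_ds.
- move=> t; have [z z0 coord_z] := coord_edge_surj matchingM n_odd unmatchedE b_lower t.
  by exists z => // i; rewrite size_ds => lt_i; rewrite nth_ds ?size_ds ?coord_z.
Qed.

Lemma critical_group_iso_K2 (s : 'I_2) :
  critical_group_iso (adjKM (set0 : {set {set 'I_2}})) s [::].
Proof.
have matching0 : is_matching (set0 : {set {set 'I_2}}) by split=> e; rewrite inE.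
have mate0 u : mate set0 u = u by rewrite /mate; case: pickP => // v; rewrite inE.
exists 0; split=> [y|x]; first by exists 0 => -[].
split=> [_|]; last by move=> _ [].
exists x; apply/matrixP => i j; rewrite (ord1 i) (ord1 j) red_laplacian_mulE //.
by rewrite /lapKM mate0 (bigD1_ord s) //= ext0_pivot big_ord1 ext0_lift; ring.
Qed.

Theorem proposition5p2 (n k : nat) (M : {set {set 'I_n}}) (s : 'I_n) :
  is_matching M -> #|M| = k ->
  ((2 * k + 2 <= n)%N ->
     critical_group_iso (adjKM M) s
       (nseq (n - 2 * k - 2) (Posz n) ++ nseq k (Posz (n * (n - 2))))) /\
  ((0 < k)%N -> n = (2 * k + 1)%N ->
     critical_group_iso (adjKM M) s
       (Posz (n - 2) :: nseq (k - 1) (Posz (n * (n - 2))))).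
Proof.
move=> matchingM Mk; split=> [le_n|]; last exact: critical_group_iso_one_unmatched.
have [n_gt2|n_le2] := ltnP 2 n; first exact: critical_group_iso_two_unmatched.
have n2 : n = 2%N by lia.
subst n; have k0 : k = 0%N by lia.
have M0 : M = set0 by apply/eqP; rewrite -cards_eq0 Mk k0.
by rewrite M0 k0; apply: critical_group_iso_K2.
Qed.
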